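(* Let $(C,A_\zeta,\mathbb X,A,B;\sigma_1)$ be an invertible node. Then $(C\mathbb X^{-1},A,\mathbb X^{-1},A_\zeta,\mathbb X^{-1}B;\sigma_1)$ is also a node, i.e. with $A$ in the role of $A_\zeta$ and $A_\zeta$ in the role of $A$: $\mathbb X^{-1}(D(A_\zeta))\subseteq D(A_\zeta)$ and $A_\zeta\mathbb X^{-1}u+\mathbb X^{-1}Au+\mathbb X^{-1}B\sigma_1C\mathbb X^{-1}u=0$ for all $u\in D(A)$.
   Context: A Krein space $\mathcal K$ is a Hilbert space with an extra continuous Hermitian (possibly indefinite) sesquilinear form; adjoints are with respect to it; $\mathbb C^2$ has its standard inner product. Let $\sigma_1$ be an invertible self-adjoint $2\times2$ matrix. A node $(C,A_\zeta,\mathbb X,A,B;\sigma_1)$ consists of bounded $C:\mathcal K\to\mathbb C^2$, $\mathbb X:\mathcal K\to\mathcal K$, $B:\mathbb C^2\to\mathcal K$ and generators $A,A_\zeta$ of strongly continuous groups on $\mathcal K$ with common dense domain $D(A)=D(A_\zeta)$, such that $\mathbb X(D(A))\subseteq D(A)$ and $A\mathbb Xu+\mathbb XA_\zeta u+B\sigma_1Cu=0$ for all $u\in D(A)$. The node is invertible if $\mathbb X$ is boundedly invertible and $\mathbb X^{-1}(D(A))\subseteq D(A)$. *)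

From HB Require Import structures.
From mathcomp Require Import all_boot all_order all_algebra.
From mathcomp Require Import complex.
From mathcomp Require Import all_classical all_reals all_analysis.

Set Implicit Arguments.
Unset Strict Implicit.
Unset Printing Implicit Defensive.

Import Order.TTheory GRing.Theory Num.Theory.
Import numFieldNormedType.Exports.
Local Open Scope ring_scope.
Local Open Scope classical_set_scope.

Section Defs.
Variable R : realType.
Local Notation C := R[i].

Definition clinear (U V : lmodType C) (f : U -> V) : Prop :=
  forall (a : C) (u v : U), f (a *: u + v) = a *: f u + f v.

Definition bounded_op (U V : normedModType C) (f : U -> V) : Prop :=
  clinear f /\ exists M : C, forall u : U, `|f u| <= M * `|u|.

(* A Krein space: a (complex) Hilbert space -- a complete normed space whose
   norm comes from an inner product -- together with an additional continuous
   Hermitian (possibly indefinite) sesquilinear form. *)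
Definition is_krein_space (K : completeNormedModType C) : Prop :=
  exists (ip kf : K -> K -> C),
    (forall (a : C) (x y z : K), ip (a *: x + y) z = a * ip x z + ip y z) /\
    (forall x y : K, ip y x = conjc (ip x y)) /\
    (forall x : K, `|x| ^+ 2 = ip x x) /\
    (forall (a : C) (x y z : K), kf (a *: x + y) z = a * kf x z + kf y z) /\
    (forall x y : K, kf y x = conjc (kf x y)) /\
    (exists M : C, forall x y : K, `|kf x y| <= M * `|x| * `|y|).

Definition sc_group (K : normedModType C) (T : R -> K -> K) : Prop :=
  (forall t, bounded_op (T t)) /\
  (forall x, T 0 x = x) /\
  (forall s t x, T (s + t) x = T s (T t x)) /\
  (forall x, continuous (fun t => T t x)).

Definition is_generator (K : normedModType C) (T : R -> K -> K)
    (D : set K) (A : K -> K) : Prop :=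
  (forall x, D x ->
     (fun h : R => ((h%:C)%C)^-1 *: (T h x - x)) @ 0^' --> A x) /\
  (forall (x y : K),
     (fun h : R => ((h%:C)%C)^-1 *: (T h x - x)) @ 0^' --> y -> D x).

Definition is_group_generator (K : normedModType C) (D : set K) (A : K -> K) :=
  exists T : R -> K -> K, sc_group T /\ is_generator T D A.

Definition sigma_ok (s1 : 'M[C]_2) : Prop :=
  s1 \in unitmx /\ map_mx conjc s1^T = s1.

(* The node (Cop, Az, X, A, B; s1), where D = D(A) = D(Az) is the common
   domain of the two generators A and Az. *)
Definition is_node (K : completeNormedModType C) (Cop : K -> 'cV[C]_2)
    (Az X A : K -> K) (B : 'cV[C]_2 -> K) (s1 : 'M[C]_2) (D : set K) : Prop :=
  sigma_ok s1 /\
  bounded_op Cop /\ bounded_op X /\ bounded_op B /\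
  is_group_generator D A /\ is_group_generator D Az /\
  X @` D `<=` D /\
  (forall u, D u -> A (X u) + X (Az u) + B (s1 *m Cop u) = 0).

End Defs.

From HB Require Import structures.
From mathcomp Require Import all_boot all_order all_algebra.
From mathcomp Require Import complex.
From mathcomp Require Import all_classical all_reals all_analysis.
Set Implicit Arguments.
Unset Strict Implicit.
Unset Printing Implicit Defensive.

Import Order.TTheory GRing.Theory Num.Theory.
Import numFieldNormedType.Exports.
Local Open Scope ring_scope.
Local Open Scope classical_set_scope.

(* Apply X^-1 to the node identity at X^-1 u: the middle term X (Az (X^-1 u))
   becomes Az (X^-1 u), while A u and B s1 C X^-1 u pick up a factor X^-1.
   Everything else (the generators, the domain, s1) is unchanged, with the
   roles of A and Az swapped. *)

Section ComplexLinear.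
Variable R : realType.

Lemma clinearD (U V : lmodType R[i]) (f : U -> V) :
  clinear f -> forall u v, f (u + v) = f u + f v.
Proof. by move=> f_lin u v; have := f_lin 1 u v; rewrite !scale1r. Qed.

Lemma clinear0 (U V : lmodType R[i]) (f : U -> V) : clinear f -> f 0 = 0.
Proof.
move=> f_lin; apply: (@addrI _ (f 0)).
by rewrite addr0 -(clinearD f_lin) addr0.
Qed.

Lemma clinear_comp (U V W : lmodType R[i]) (f : U -> V) (g : V -> W) :
  clinear f -> clinear g -> clinear (g \o f).
Proof. by move=> f_lin g_lin a u v /=; rewrite f_lin g_lin. Qed.

Lemma bound_normr (U V : normedModType R[i]) (f : U -> V) (M : R[i]) :
  (forall u, `|f u| <= M * `|u|) -> forall u, `|f u| <= `|M| * `|u|.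
Proof.
move=> f_bd u; have fu_bd := f_bd u.
have Mu_ge0 : 0 <= M * `|u| by apply: le_trans fu_bd.
by rewrite -(ger0_norm Mu_ge0) normrM normr_id in fu_bd.
Qed.

Lemma bounded_op_comp (U V W : normedModType R[i]) (f : U -> V) (g : V -> W) :
  bounded_op f -> bounded_op g -> bounded_op (g \o f).
Proof.
move=> [f_lin [Mf f_bd]] [g_lin [Mg g_bd]].
split; first exact: clinear_comp.
exists (`|Mg| * `|Mf|) => u /=.
apply: (le_trans (bound_normr g_bd (f u))).
by rewrite -mulrA ler_wpM2l // (bound_normr f_bd).
Qed.

Lemma node_identity_inv (V : lmodType R[i]) (A Az X Xinv : V -> V) (b : V) (v : V) :
  clinear Xinv -> cancel X Xinv ->
  A (X v) + X (Az v) + b = 0 -> Az v + Xinv (A (X v)) + Xinv b = 0.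
Proof.
move=> Xinv_lin XK node_eq.
have := congr1 Xinv node_eq.
by rewrite (clinear0 Xinv_lin) !(clinearD Xinv_lin) XK (addrC (Xinv _)).
Qed.

End ComplexLinear.

Theorem mainTheorem5 (R : realType) (K : completeNormedModType R[i])
    (Cop : K -> 'cV[R[i]]_2) (Az X A : K -> K) (B : 'cV[R[i]]_2 -> K)
    (s1 : 'M[R[i]]_2) (D : set K) (Xinv : K -> K) :
  is_krein_space K ->
  is_node Cop Az X A B s1 D ->
  (* the node is invertible: X has the bounded inverse Xinv, which maps D(A) into D(A) *)
  bounded_op Xinv -> cancel X Xinv -> cancel Xinv X -> Xinv @` D `<=` D ->
  is_node (Cop \o Xinv) A Xinv Az (Xinv \o B) s1 D.
Proof.
move=> _ [s1_ok [Cop_bd [_ [B_bd [A_gen [Az_gen [_ node_eq]]]]]]]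
  Xinv_bd XK XinvK Xinv_D.
split; first exact: s1_ok.
split; first exact: bounded_op_comp.
split; first exact: Xinv_bd.
split; first exact: bounded_op_comp.
do 3 (split; first by []).
move=> u Du /=.
have Dv : D (Xinv u) by apply: Xinv_D; exists u.
have := node_identity_inv Xinv_bd.1 XK (node_eq _ Dv).
by rewrite XinvK.
Qed.
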